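(* Let $p$ be a prime with $p\equiv 1\pmod{12}$. There exist $x,y\in\mathbb{F}_p$ with $x^4+6x^2-3=0$ and $y^2=x^3-x$ if and only if there exists $y\in\mathbb{F}_p$ with $y^8+360y^4-48=0$. *)

From mathcomp Require Import all_boot all_algebra.

From mathcomp Require Import all_boot all_algebra.
From mathcomp Require Import ring.
Import GRing.Theory.
Local Open Scope ring_scope.

(* If y^2 = x^3 - x, then y^8 + 360 y^4 - 48 is a polynomial multiple of
   x^4 + 6 x^2 - 3, which gives one direction.  Conversely, from a root y of
   the octic, x := 52 y^2 / (y^4 - 28) satisfies x^2 = (y^4 + 24) / 52, which
   turns both equations for (x, y) into multiples of the octic.  This needs
   52 != 0 and y^4 != 28; the latter holds because the octic takes the value
   2^6 13^2 at y^4 = 28.  In characteristic 13 the octic is (y^4 - 2)^2 and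
   (y^2, y) is a solution.  The only property of F_p used is that 2 != 0. *)

Definition quartic {R : pzRingType} (x : R) := x ^+ 4 + 6%:R * x ^+ 2 - 3%:R.

Definition octic {R : pzRingType} (y : R) := y ^+ 8 + 360%:R * y ^+ 4 - 48%:R.

Lemma octic_curve_quartic {R : comPzRingType} {x y : R} :
  y ^+ 2 = x ^+ 3 - x ->
  octic y = (x ^+ 8 - 10%:R * x ^+ 6 + 69%:R * x ^+ 4 - 88%:R * x ^+ 2 + 16%:R)
            * quartic x.
Proof.
move=> hy; rewrite /octic /quartic.
have -> : y ^+ 8 = (y ^+ 2) ^+ 4 by rewrite -exprM.
have -> : y ^+ 4 = (y ^+ 2) ^+ 2 by rewrite -exprM.
rewrite hy; ring.
Qed.

Section OcticRoots.

Variable F : fieldType.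

Lemma octic_char13 (y : F) : 13%:R = 0 :> F -> octic y = (y ^+ 4 - 2%:R) ^+ 2.
Proof.
move=> h13; rewrite /octic.
have -> : y ^+ 8 + 360%:R * y ^+ 4 - 48%:R
          = (y ^+ 4 - 2%:R) ^+ 2 + 13%:R * (28%:R * y ^+ 4 - 4%:R) by ring.
by rewrite h13 mul0r addr0.
Qed.

Lemma curve_point_char13 (y : F) : 13%:R = 0 :> F -> octic y = 0 ->
  quartic (y ^+ 2) = 0 /\ y ^+ 2 = (y ^+ 2) ^+ 3 - y ^+ 2.
Proof.
move=> h13; rewrite octic_char13 // => /eqP; rewrite expf_eq0 subr_eq0 /=.
move=> /eqP y4; split.
  have -> : quartic (y ^+ 2) = (y ^+ 4) ^+ 2 + 6%:R * y ^+ 4 - 3%:R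
    by rewrite /quartic; ring.
  by rewrite y4 -h13; ring.
have -> : (y ^+ 2) ^+ 3 - y ^+ 2 = y ^+ 2 * (y ^+ 4 - 1) by ring.
by rewrite y4 (_ : 2%:R - 1 = 1 :> F) ?mulr1 //; ring.
Qed.

Hypotheses (h2 : 2%:R != 0 :> F) (h13 : 13%:R != 0 :> F).

Lemma natr52_neq0 : 52%:R != 0 :> F.
Proof.
by rewrite (_ : 52 = 2 * 2 * 13)%N // !natrM !mulf_neq0.
Qed.

Lemma octic_root_y4_neq28 (y : F) : octic y = 0 -> y ^+ 4 != 28%:R.
Proof.
move=> hy; apply/eqP => y4; move/eqP: hy; apply/negP.
have -> : octic y = (y ^+ 4) ^+ 2 + 360%:R * y ^+ 4 - 48%:R
  by rewrite /octic; ring.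
rewrite y4 (_ : _ - 48%:R = 2%:R ^+ 6 * 13%:R ^+ 2); last by ring.
by rewrite mulf_neq0 // expf_neq0.
Qed.

Variables (y : F) (hy : octic y = 0).

Let x := 52%:R * y ^+ 2 / (y ^+ 4 - 28%:R).

Let y4_sub28_neq0 : y ^+ 4 - 28%:R != 0.
Proof. by rewrite subr_eq0 octic_root_y4_neq28. Qed.

Lemma octic_witness_sqr : x ^+ 2 = (y ^+ 4 + 24%:R) / 52%:R.
Proof.
apply/eqP; rewrite -subr_eq0.
have -> : x ^+ 2 - (y ^+ 4 + 24%:R) / 52%:R
  = - (y ^+ 4 - 392%:R) * octic y / (52%:R * (y ^+ 4 - 28%:R) ^+ 2).
  by rewrite /x /octic; field; rewrite y4_sub28_neq0 natr52_neq0.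
by rewrite hy mulr0 mul0r.
Qed.

Lemma octic_witness_quartic : quartic x = 0.
Proof.
have -> : quartic x = (x ^+ 2) ^+ 2 + 6%:R * x ^+ 2 - 3%:R
  by rewrite /quartic; ring.
rewrite octic_witness_sqr.
have -> : ((y ^+ 4 + 24%:R) / 52%:R) ^+ 2 + 6%:R * ((y ^+ 4 + 24%:R) / 52%:R)
          - 3%:R = octic y / 52%:R ^+ 2.
  rewrite /octic; field.
  by rewrite (_ : 2704 = 52 ^ 2)%N // natrX expf_neq0 natr52_neq0.
by rewrite hy mul0r.
Qed.

Lemma octic_witness_curve : y ^+ 2 = x ^+ 3 - x.
Proof.
have -> : x ^+ 3 - x = x * (x ^+ 2 - 1) by ring.
by rewrite octic_witness_sqr /x; field; rewrite y4_sub28_neq0 natr52_neq0.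
Qed.

End OcticRoots.

Lemma curve_quartic_octic {F : fieldType} : 2%:R != 0 :> F ->
  (exists x y : F, quartic x = 0 /\ y ^+ 2 = x ^+ 3 - x) <->
  (exists y : F, octic y = 0).
Proof.
move=> h2; split.
  by move=> [x [y [hx hy]]]; exists y; rewrite (octic_curve_quartic hy) hx mulr0.
move=> [y hy]; have [h13 | h13] := eqVneq (13%:R : F) 0.
  by exists (y ^+ 2), y; exact: curve_point_char13.
exists (52%:R * y ^+ 2 / (y ^+ 4 - 28%:R)), y.
by split; [exact: octic_witness_quartic | exact: octic_witness_curve].
Qed.

Lemma Fp_natr2_neq0 {p : nat} : prime p -> p = 1 %[mod 12] -> 2%:R != 0 :> 'F_p.
Proof.
move=> hp hmod; rewrite -(dvdn_pcharf (pchar_Fp hp)).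
by rewrite dvdn_prime2 //; apply/eqP => p2; rewrite p2 in hmod.
Qed.

Theorem lemma1 (p : nat) (hp : prime p) (hmod : p = 1 %[mod 12]) :
  (exists x y : 'F_p, x ^+ 4 + 6%:R * x ^+ 2 - 3%:R = 0 /\ y ^+ 2 = x ^+ 3 - x)
  <->
  (exists y : 'F_p, y ^+ 8 + 360%:R * y ^+ 4 - 48%:R = 0).
Proof. exact (curve_quartic_octic (Fp_natr2_neq0 hp hmod)). Qed.
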